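(* Let $C_m$ denote the (unweighted) cycle on $m$ vertices. Then $\mathrm{OPT}(C_m)=m\log_2 m+O(m)$.
   Context: For a graph $G=(V,E)$ with unit edge weights, a hierarchical clustering tree (HC-tree) is a rooted tree whose leaves are in bijection with $V$; its cost is $C_G(\mathcal T)=\sum_{(u,v)\in E}|\mathrm{leaves}(\mathcal T[u\vee v])|$, where $u\vee v$ is the lowest common ancestor of $u,v$ in $\mathcal T$ and $\mathrm{leaves}(\mathcal T[z])$ is the set of leaves of the subtree rooted at $z$. $\mathrm{OPT}(G)$ is the minimum cost over all HC-trees of $G$. *)

From Stdlib Require Import ClassicalEpsilon.
From mathcomp Require Import all_boot.
Set Implicit Arguments. Unset Strict Implicit. Unset Printing Implicit Defensive.

Inductive hctree (T : Type) : Type :=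
| Leaf of T
| Node of seq (hctree T).
Arguments Leaf {T}. Arguments Node {T}.

Section HC.
Variable T : finType.

Fixpoint leaves (t : hctree T) : seq T :=
  match t with
  | Leaf x => [:: x]
  | Node ts => flatten (map leaves ts)
  end.

(* Every internal node has at least one child (so the leaves of the tree are
   exactly the labelled [Leaf] constructors). *)
Fixpoint wf_tree (t : hctree T) : bool :=
  match t with
  | Leaf _ => true
  | Node ts => (~~ nilp ts) && all wf_tree ts
  end.

Definition is_hctree (t : hctree T) : bool :=
  wf_tree t && perm_eq (leaves t) (enum T).

(* |leaves(T[u \/ v])| : the number of leaves of the subtree rooted at the lowest
   common ancestor of u and v (descend into a child containing both, if any). *)
Fixpoint lca_size (u v : T) (t : hctree T) : nat :=
  match t with
  | Leaf _ => 1
  | Node ts =>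
      foldr (fun c acc => if (u \in leaves c) && (v \in leaves c)
                          then lca_size u v c else acc)
            (size (flatten (map leaves ts))) ts
  end.

(* A (simple, undirected) graph on T is a symmetric irreflexive relation e;
   each undirected edge {u,v} is counted once (u before v in enum order). *)
Definition hc_cost (e : rel T) (t : hctree T) : nat :=
  \sum_(u : T) \sum_(v : T | (enum_rank u < enum_rank v) && e u v) lca_size u v t.

(* OPT(G) = min cost over all HC-trees (0 by convention if none exists,
   i.e. only when T is empty). *)
Definition opt_pred (e : rel T) (k : nat) : bool :=
  if excluded_middle_informative (exists t, is_hctree t /\ hc_cost e t = k)
  then true else false.

Definition OPT (e : rel T) : nat :=
  match excluded_middle_informative (exists k, opt_pred e k) with
  | left H => ex_minn H
  | right _ => 0
  end.
End HC.

Definition cycle_rel (m : nat) : rel 'I_m :=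
  fun i j => (i != j) && ((j == (i.+1 %% m) :> nat) || (i == (j.+1 %% m) :> nat)).

(* Deleting one edge of C_m leaves a Hamiltonian path, and the cost of the
   cycle is that of the path plus the cost of the closing edge, at most m.
   For the path: at the lowest node of the tree whose subtree contains a
   segment of n vertices, some edge of the segment is cut and charged at least
   n; splitting the segment at that edge gives cost(n) >= cost(a) + cost(b) + n
   with a + b = n, whence cost(n) >= n log2 n by the entropy inequality
   a log2 a + b log2 b + n >= n log2 n.  Conversely, the balanced binary tree of
   depth ceil(log2 m) charges every vertex once per level, so the path costs at
   most m ceil(log2 m). *)

From Stdlib Require Import Reals Lra Classical ClassicalEpsilon.
From mathcomp Require Import all_boot zify.
Set Implicit Arguments. Unset Strict Implicit. Unset Printing Implicit Defensive.

Section HCTreeInd.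
Variables (T : Type) (P : hctree T -> Prop).
Hypothesis P_Leaf : forall x, P (Leaf x).
Hypothesis P_Node : forall ts, (forall c, List.In c ts -> P c) -> P (Node ts).

Fixpoint hctree_nested_ind (t : hctree T) : P t :=
  match t with
  | Leaf x => P_Leaf x
  | Node ts => P_Node ((fix in_children ts : forall c, List.In c ts -> P c :=
       match ts with
       | [::] => fun c (Hc : False) => False_ind _ Hc
       | c0 :: ts' => fun c Hc =>
           match Hc with
           | or_introl E => eq_ind c0 P (hctree_nested_ind c0) c E
           | or_intror Hc' => in_children ts' c Hc'
           end
       end) ts)
  end.
End HCTreeInd.

Section LCA.
Variables (T : finType) (u v : T).
Implicit Types (x : T) (c : hctree T) (ts : seq (hctree T)).

Definition lca_step (c : hctree T) (acc : nat) :=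
  if (u \in leaves c) && (v \in leaves c) then lca_size u v c else acc.

Lemma lca_size_NodeE ts :
  lca_size u v (Node ts) = foldr lca_step (size (leaves (Node ts))) ts.
Proof. by []. Qed.

Lemma mem_leaves_child x ts c :
  List.In c ts -> x \in leaves c -> x \in leaves (Node ts).
Proof.
elim: ts => [|c0 ts IH] //= [->|Hc] Hx; rewrite mem_cat ?Hx //.
by rewrite IH ?orbT.
Qed.

Lemma exists_child_leaf x ts :
  x \in leaves (Node ts) -> exists2 c, List.In c ts & x \in leaves c.
Proof.
elim: ts => [|c0 ts IH] //=; rewrite mem_cat => /orP[Hx|/IH[c Hc Hx]].
  by exists c0; [left|].
by exists c; [right|].
Qed.

Lemma uniq_leaves_child ts c :
  uniq (leaves (Node ts)) -> List.In c ts -> uniq (leaves c).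
Proof.
elim: ts => [|c0 ts IH] //=; rewrite cat_uniq => /and3P[Hc0 _ Hts] [<-|] //.
exact: IH.
Qed.

(* [hctree] has no decidable equality, so children are identified by leaves. *)
Lemma leaves_child_eq x ts c1 c2 :
  uniq (leaves (Node ts)) -> List.In c1 ts -> List.In c2 ts ->
  x \in leaves c1 -> x \in leaves c2 -> leaves c1 = leaves c2.
Proof.
elim: ts => [|c0 ts IH] //=; rewrite cat_uniq => /and3P[_ Hdis Hts].
have Hnot0 c : List.In c ts -> x \in leaves c -> x \notin leaves c0.
  move=> Hc Hxc; apply/negP => Hx0; move/hasPn: Hdis => /(_ x).
  by rewrite (mem_leaves_child Hc Hxc) Hx0 => /(_ isT).
case=> [<-|H1] [<-|H2] Hx1 Hx2 //.
- by move: (Hnot0 _ H2 Hx2); rewrite Hx1.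
- by move: (Hnot0 _ H1 Hx1); rewrite Hx2.
- exact: IH.
Qed.

Lemma lca_size_child ts c :
  uniq (leaves (Node ts)) -> List.In c ts -> u \in leaves c -> v \in leaves c ->
  lca_size u v (Node ts) = lca_size u v c.
Proof.
move=> Huniq Hc Hu Hv; rewrite lca_size_NodeE; move: (size _) => acc.
elim: ts Huniq Hc => [|c0 ts IH] //= Huniq [->|Hc].
  by rewrite /lca_step Hu Hv.
have Hu0 : u \notin leaves c0.
  apply/negP => Hu0; move: Huniq; rewrite cat_uniq => /and3P[_ /hasPn /(_ u) + _].
  by rewrite (mem_leaves_child Hc Hu) Hu0 => /(_ isT).
by rewrite /lca_step (negbTE Hu0) IH //; move: Huniq; rewrite cat_uniq => /and3P[].
Qed.

Lemma lca_size_cut ts c :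
  uniq (leaves (Node ts)) -> List.In c ts -> u \in leaves c -> v \notin leaves c ->
  lca_size u v (Node ts) = size (leaves (Node ts)).
Proof.
move=> Huniq Hc Hu Hv.
have Hnone c' : List.In c' ts -> ~~ ((u \in leaves c') && (v \in leaves c')).
  move=> Hc'; apply/andP => -[Hu' Hv'].
  by move: Hv; rewrite -(leaves_child_eq Huniq Hc' Hc Hu' Hu) Hv'.
rewrite lca_size_NodeE; move: (size _) => acc; clear -Hnone.
elim: ts Hnone => [|c0 ts IH] //= Hnone.
rewrite /lca_step (negbTE (Hnone c0 (or_introl erefl))).
by apply: IH => c' Hc'; apply: Hnone; right.
Qed.

Lemma size_leaves_child ts c :
  List.In c ts -> size (leaves c) <= size (leaves (Node ts)).
Proof.
elim: ts => [|c0 ts IH] //= [<-|Hc]; rewrite size_cat ?leq_addr //.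
exact: leq_trans (IH Hc) (leq_addl _ _).
Qed.

Lemma foldr_lca_step_cases acc ts :
  foldr lca_step acc ts = acc \/
  exists2 c, List.In c ts & foldr lca_step acc ts = lca_size u v c.
Proof.
elim: ts => [|c0 ts IH] /=; first by left.
rewrite {1 3}/lca_step; case: ifP => _; first by right; exists c0; [left|].
by case: IH => [->|[c Hc ->]]; [left|right; exists c; [right|]].
Qed.

Lemma lca_size_le t : lca_size u v t <= size (leaves t).
Proof.
elim/hctree_nested_ind: t => [x|ts IH] //; rewrite lca_size_NodeE.
case: (foldr_lca_step_cases (size (leaves (Node ts))) ts) => [->|[c Hc ->]] //.
exact: leq_trans (IH c Hc) (size_leaves_child Hc).
Qed.

End LCA.

Lemma split_at_exit (T : Type) (P : pred T) x s :
  P x -> ~~ all P s ->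
  exists s1 y s2, [/\ s = s1 ++ y :: s2, P (last x s1) & ~~ P y].
Proof.
elim: s x => [|y s IH] //= x Px; case: (boolP (P y)) => Py /=.
  by move=> /(IH y Py)[s1 [z [s2 [-> Hl Hz]]]]; exists (y :: s1), z, s2.
by exists [::], y, s.
Qed.

Section Paths.
Variable T : finType.
Implicit Types (x y : T) (s : seq T) (t c : hctree T) (ts : seq (hctree T)).

Definition path_cost t x s : nat := sumn (pairmap (fun a b => lca_size a b t) x s).

Lemma path_cost_cons t x y s : path_cost t x (y :: s) = lca_size x y t + path_cost t y s.
Proof. by []. Qed.

Lemma path_cost_cat t x s1 y s2 :
  path_cost t x (s1 ++ y :: s2) =
  path_cost t x s1 + lca_size (last x s1) y t + path_cost t y s2.
Proof. by rewrite /path_cost pairmap_cat sumn_cat /= addnA. Qed.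

Lemma path_cost_child ts c x s :
  uniq (leaves (Node ts)) -> List.In c ts -> {subset x :: s <= leaves c} ->
  path_cost (Node ts) x s = path_cost c x s.
Proof.
move=> Hu Hc; elim: s x => [|y s IH] x //= Hsub.
rewrite !path_cost_cons (lca_size_child Hu Hc) ?Hsub ?mem_head ?inE ?eqxx ?orbT //.
by rewrite IH // => z Hz; apply: Hsub; rewrite inE Hz orbT.
Qed.

Lemma path_cut_at_root ts x s :
  uniq (leaves (Node ts)) -> {subset x :: s <= leaves (Node ts)} ->
  (forall c, List.In c ts -> ~ {subset x :: s <= leaves c}) ->
  exists s1 y s2,
    s = s1 ++ y :: s2 /\ lca_size (last x s1) y (Node ts) = size (leaves (Node ts)).
Proof.
move=> Hu Hsub Hnot; have [c0 Hc0 Hx] := exists_child_leaf (Hsub x (mem_head x s)).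
have Hexit : ~~ all (fun z => z \in leaves c0) s.
  apply/allP => Hall; apply: (Hnot c0 Hc0) => z; rewrite inE => /orP[/eqP->|] //.
  exact: Hall.
have [s1 [y [s2 [-> Hl Hy]]]] := @split_at_exit _ (fun z => z \in leaves c0) x s Hx Hexit.
by exists s1, y, s2; split; last exact: lca_size_cut Hc0 Hl Hy.
Qed.

Lemma path_lowest_node t x s :
  uniq (leaves t) -> uniq (x :: s) -> s != [::] -> {subset x :: s <= leaves t} ->
  exists ts, [/\ path_cost t x s = path_cost (Node ts) x s,
    uniq (leaves (Node ts)), {subset x :: s <= leaves (Node ts)} &
    forall c, List.In c ts -> ~ {subset x :: s <= leaves c}].
Proof.
elim/hctree_nested_ind: t => [z|ts IH] Hu Hp Hs Hsub.
  case: s Hp Hs Hsub => [|y s] //= /andP[+ _] _ Hsub; rewrite inE negb_or => /andP[Hxy _].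
  have Ez w : w \in [:: x, y & s] -> w = z by move/Hsub; rewrite inE => /eqP.
  have Exz : x = z by apply: Ez; rewrite inE eqxx.
  have Eyz : y = z by apply: Ez; rewrite !inE eqxx orbT.
  by rewrite Exz Eyz eqxx in Hxy.
case: (classic (exists2 c, List.In c ts & {subset x :: s <= leaves c})) => [[c Hc Hsc]|Hnot].
  have [ts' [Ec Hu' Hsub' Hcut]] := IH c Hc (uniq_leaves_child Hu Hc) Hp Hs Hsc.
  by exists ts'; rewrite (path_cost_child Hu Hc Hsc).
by exists ts; split=> // c Hc Hsc; apply: Hnot; exists c.
Qed.

End Paths.

Section BalancedTree.
Variable T : finType.
Implicit Types (x : T) (s : seq T).

Fixpoint bal_tree (d : nat) x s : hctree T :=
  match d, s with
  | d'.+1, _ :: _ =>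
      let h := size s %/ 2 in
      Node [:: bal_tree d' x (take h s); bal_tree d' (nth x s h) (drop h.+1 s)]
  | _, _ => Node (map Leaf (x :: s))
  end.

Lemma bal_treeS d x s : s != [::] ->
  bal_tree d.+1 x s =
  Node [:: bal_tree d x (take (size s %/ 2) s);
           bal_tree d (nth x s (size s %/ 2)) (drop (size s %/ 2).+1 s)].
Proof. by case: s. Qed.

Lemma half_size_lt s : s != [::] -> size s %/ 2 < size s.
Proof. by case: s => //= z s _; rewrite ltn_divLR //; lia. Qed.

Lemma split_half x s : s != [::] ->
  s = take (size s %/ 2) s ++ nth x s (size s %/ 2) :: drop (size s %/ 2).+1 s.
Proof. by move=> Hs; rewrite -drop_nth ?cat_take_drop ?half_size_lt. Qed.

Lemma leaves_bal_tree d x s : leaves (bal_tree d x s) = x :: s.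
Proof.
elim: d x s => [|d IH] x s; first by rewrite /= -map_comp flatten_seq1.
case: (eqVneq s [::]) => [->|Hs] //.
by rewrite bal_treeS //= !IH cats0 cat_cons -split_half.
Qed.

Lemma wf_bal_tree d x s : wf_tree (bal_tree d x s).
Proof.
have wf_star y s' : wf_tree (Node (map Leaf (y :: s'))) by elim: s'.
elim: d x s => [|d IH] x s; first exact: wf_star.
case: (eqVneq s [::]) => [->|Hs] //.
by rewrite bal_treeS //= !IH.
Qed.

(* Each level of the recursion charges every vertex once, through the edge cut
   between the two halves. *)
Lemma path_cost_bal_tree d x s : uniq (x :: s) -> size s < 2 ^ d ->
  path_cost (bal_tree d x s) x s <= (size s).+1 * d.
Proof.
elim: d x s => [|d IH] x s Hu Hs; first by case: s Hu Hs.
case: (eqVneq s [::]) => [->|Hs0] //.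
rewrite bal_treeS //; set h := size s %/ 2.
set l := bal_tree d x _; set r := bal_tree d _ _.
have Es := split_half x Hs0; rewrite -/h in Es.
have Hleaves : leaves (Node [:: l; r]) = x :: s.
  by rewrite /= !leaves_bal_tree cats0 cat_cons -Es.
have Hu' : uniq (leaves (Node [:: l; r])) by rewrite Hleaves.
move: Hu; rewrite {1}Es -cat_cons cat_uniq => /and3P[Hul /hasPn Hdisj Hur].
have Hl : List.In l [:: l; r] by left.
have Hr : List.In r [:: l; r] by right; left.
rewrite {1}Es path_cost_cat.
rewrite (path_cost_child Hu' Hl) ?leaves_bal_tree //.
rewrite (path_cost_child Hu' Hr) ?leaves_bal_tree //.
rewrite (lca_size_cut Hu' Hl) ?leaves_bal_tree ?mem_last //; last first.
  by apply: Hdisj; exact: mem_head.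
rewrite Hleaves /=.
have Hh : h < size s by exact: half_size_lt.
rewrite expnS in Hs.
have IHl := IH x (take h s) Hul ltac:(rewrite size_take Hh /h; lia).
have IHr := IH (nth x s h) (drop h.+1 s) Hur ltac:(rewrite size_drop /h; lia).
rewrite size_take Hh in IHl; rewrite size_drop in IHr.
have Ed : h.+1 * d + (size s - h.+1).+1 * d = (size s).+1 * d.
  by rewrite -mulnDl; congr (_ * _); lia.
by rewrite mulnS -Ed addnAC [_.+1 + _]addnC leq_add2r leq_add.
Qed.

End BalancedTree.

Section OptimalTree.
Variables (T : finType) (e : rel T).
Implicit Types t : hctree T.

Lemma OPT_le_cost t : is_hctree t -> OPT e <= hc_cost e t.
Proof.
move=> Ht; have Hk : opt_pred e (hc_cost e t).
  by rewrite /opt_pred; case: excluded_middle_informative => // -[]; exists t.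
rewrite /OPT; case: excluded_middle_informative => [H|[]]; last by exists (hc_cost e t).
by case: ex_minnP => k _; apply.
Qed.

Lemma OPT_attained t0 : is_hctree t0 -> exists t, is_hctree t /\ hc_cost e t = OPT e.
Proof.
move=> Ht0; rewrite /OPT; case: excluded_middle_informative => [H|[]].
  by case: ex_minnP => k; rewrite /opt_pred; case: excluded_middle_informative.
exists (hc_cost e t0); rewrite /opt_pred.
by case: excluded_middle_informative => // -[]; exists t0.
Qed.

End OptimalTree.

Section Cycle.
Variable M : nat.

Lemma sumn_pairmap_enum_ord (f : 'I_M.+1 -> 'I_M.+1 -> nat) :
  sumn (pairmap f ord0 (behead (enum 'I_M.+1))) = \sum_(i < M) f (inord i) (inord i.+1).
Proof.
have Henum : ord0 :: behead (enum 'I_M.+1) = enum 'I_M.+1 by rewrite enum_ordSl.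
have Hsize : size (behead (enum 'I_M.+1)) = M by rewrite size_behead size_enum_ord.
rewrite sumnE (big_nth 0) size_pairmap Hsize big_mkord; apply: eq_bigr => i _.
have Hi := ltn_ord i.
rewrite (nth_pairmap ord0) ?Hsize // Henum nth_behead.
by congr f; apply/val_inj => /=; rewrite nth_enum_ord ?inordK //; lia.
Qed.

Lemma cycle_rel_forward (u : 'I_M.+1) : u < M -> forall v,
  (enum_rank u < enum_rank v) && cycle_rel u v =
  (v == inord u.+1) || (u == 0 :> nat) && (1 < M) && (v == ord_max).
Proof.
move=> Hu v; have Hv := ltn_ord v.
have Emod : v.+1 %% M.+1 = if v == M :> nat then 0 else v.+1.
  by case: eqP => [->|Hne]; [exact: modnn | rewrite modn_small //; lia].
rewrite !enum_rank_ord /cycle_rel -!val_eqE /= inordK ?(@modn_small u.+1) ?Emod; try lia.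
by case: ifP => HvM; apply/idP/idP; lia.
Qed.

Lemma big_pred1_or (I : finType) (a c : I) (b : bool) (F : I -> nat) :
  (b -> a != c) ->
  \sum_(v | (v == a) || b && (v == c)) F v = F a + (if b then F c else 0).
Proof.
move=> Hac; rewrite (bigD1 a) ?eqxx //=; congr (_ + _).
case: b Hac => [/(_ isT) Hac|_] /=; last by rewrite big_pred0 // => v; case: eqP.
by apply: big_pred1 => v /=; case: (eqVneq v a) => [->|]; rewrite ?(negbTE Hac) ?andbT.
Qed.

Lemma hc_cost_cycle (t : hctree 'I_M.+1) :
  hc_cost (@cycle_rel M.+1) t =
  path_cost t ord0 (behead (enum 'I_M.+1)) +
  (if 1 < M then lca_size ord0 ord_max t else 0).
Proof.
rewrite /path_cost sumn_pairmap_enum_ord.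
rewrite /hc_cost big_ord_recr /= [X in _ + X]big_pred0 ?addn0; last first.
  by move=> v; rewrite !enum_rank_ord /= ltnNge -ltnS ltn_ord.
have Ewiden (i : 'I_M) : widen_ord (leqnSn M) i = inord i.
  exact: esym (inord_val (widen_ord (leqnSn M) i)).
under eq_bigr => i _.
  rewrite (eq_bigl _ _ (@cycle_rel_forward (widen_ord (leqnSn M) i) (ltn_ord i))).
  rewrite big_pred1_or /= ?Ewiden; last first.
    by move=> /andP[/eqP Hi0 HM]; rewrite -val_eqE /= inordK ?Hi0 //; lia.
  over.
rewrite big_split /=; congr (_ + _).
case: M t Ewiden => [|M'] t _; first by rewrite big_ord0.
by rewrite big_ord_recl big1 ?addn0 //= (inord_val (@ord0 M'.+1)).
Qed.

End Cycle.

Local Open Scope R_scope.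

Definition xlog2 (x : R) : R := x * (ln x / ln 2).

Lemma ln2_gt0 : 0 < ln 2.
Proof. have := ln_lt_2; lra. Qed.

Lemma ln_le_sub1 y : 0 < y -> ln y <= y - 1.
Proof. by move=> Hy; have := exp_ineq1_le (ln y); rewrite exp_ln //; lra. Qed.

Lemma xlnx_add_le A B : 0 < A -> 0 < B ->
  (A + B) * ln (A + B) <= A * ln A + B * ln B + (A + B) * ln 2.
Proof.
move=> HA HB.
(* [ln y <= y - 1] at [y = (A + B) / (2 X)], scaled by [X], for [X = A] and [X = B]. *)
have gibbs X : 0 < X -> X * (ln (A + B) - ln 2 - ln X) <= (A + B) / 2 - X.
  move=> HX; have Hy : 0 < (A + B) / (2 * X) by apply: Rdiv_lt_0_compat; lra.
  have -> : ln (A + B) - ln 2 - ln X = ln ((A + B) / (2 * X)).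
    by rewrite /Rdiv ln_mult ?ln_Rinv ?ln_mult; try lra; apply: Rinv_0_lt_compat; lra.
  have -> : (A + B) / 2 - X = X * ((A + B) / (2 * X) - 1) by field; lra.
  by apply: Rmult_le_compat_l; [lra | exact: ln_le_sub1].
have := gibbs A HA; have := gibbs B HB; lra.
Qed.

Lemma xlog2_add_le A B : 0 < A -> 0 < B ->
  xlog2 (A + B) <= xlog2 A + xlog2 B + (A + B).
Proof.
move=> HA HB; have H2 := ln2_gt0.
suff : 0 <= xlog2 A + xlog2 B + (A + B) - xlog2 (A + B) by lra.
have -> : xlog2 A + xlog2 B + (A + B) - xlog2 (A + B) =
    (A * ln A + B * ln B + (A + B) * ln 2 - (A + B) * ln (A + B)) / ln 2.
  by rewrite /xlog2; field; lra.
have H := xlnx_add_le HA HB; apply: Rle_mult_inv_pos => //; lra.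
Qed.

Lemma xlog2_1 : xlog2 1 = 0.
Proof. by rewrite /xlog2 ln_1 /Rdiv Rmult_0_l Rmult_0_r. Qed.

Lemma xlog2_le_path_cost (T : finType) (t : hctree T) x s :
  uniq (leaves t) -> uniq (x :: s) -> {subset x :: s <= leaves t} ->
  xlog2 (INR (size s).+1) <= INR (path_cost t x s).
Proof.
move: (ltnSn (size s)); move: {2}(size s).+1 => n.
elim: n t x s => [//|n IH] t x s Hn Hu Hp Hsub.
case: (eqVneq s [::]) => [->|Hs]; first by rewrite xlog2_1; apply: pos_INR.
have [ts [-> Hu' Hsub' Hcut]] := path_lowest_node Hu Hp Hs Hsub.
have [s1 [y [s2 [Es Hroot]]]] := path_cut_at_root Hu' Hsub' Hcut.
have Hsize : ((size s).+1 <= size (leaves (Node ts)))%N by exact: (uniq_leq_size Hp Hsub').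
subst s; rewrite path_cost_cat Hroot.
move: Hp Hsub' Hn Hsize; rewrite -cat_cons cat_uniq => /and3P[Hp1 _ Hp2] Hsub' Hn Hsize.
have Hsub1 : {subset x :: s1 <= leaves (Node ts)}.
  by move=> z Hz; apply: Hsub'; rewrite mem_cat Hz.
have Hsub2 : {subset y :: s2 <= leaves (Node ts)}.
  by move=> z Hz; apply: Hsub'; rewrite mem_cat Hz orbT.
rewrite size_cat /= in Hn.
have L1 := IH _ x s1 (ltac:(lia) : (size s1 < n)%nat) Hu' Hp1 Hsub1.
have L2 := IH _ y s2 (ltac:(lia) : (size s2 < n)%nat) Hu' Hp2 Hsub2.
have Hpos k : 0 < INR k.+1 by apply: lt_0_INR; lia.
have Hsplit := xlog2_add_le (Hpos (size s1)) (Hpos (size s2)).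
rewrite -plus_INR (_ : (_ + _)%coq_nat = (size (s1 ++ y :: s2)).+1) in Hsplit; last first.
  by rewrite size_cat /=; lia.
apply: Rle_trans Hsplit _; rewrite addnAC -!plusE !plus_INR.
apply: Rplus_le_compat; first exact: Rplus_le_compat.
exact/le_INR/leP.
Qed.

Lemma INR_expn k n : INR (k ^ n) = INR k ^ n.
Proof. by elim: n => [|n IH] //=; rewrite expnS -multE mult_INR IH. Qed.

Lemma INR_up_log2_le m : (0 < m)%N -> INR (up_log 2 m) <= ln (INR m) / ln 2 + 1.
Proof.
move=> Hm; have H2 := ln2_gt0.
case: (leqP m 1) => [Hm1|Hm1].
  have -> : m = 1%N by lia.
  by rewrite up_log1 ln_1 /Rdiv Rmult_0_l; simpl; lra.
have Hk : (0 < up_log 2 m)%N by rewrite up_log_gt0 Hm1.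
have Hpow : INR (2 ^ (up_log 2 m).-1) < INR m by apply/lt_INR/ltP/up_log_gtn.
have E2 : INR 2 = 2 by rewrite /=; lra.
rewrite INR_expn E2 in Hpow.
have := ln_increasing _ _ (pow_lt 2 _ Rlt_0_2) Hpow; rewrite ln_pow; last lra.
have -> : INR (up_log 2 m) = INR (up_log 2 m).-1 + 1 by rewrite -S_INR prednK.
set k := INR _ => Hln.
have -> : k = k * ln 2 / ln 2 by field; lra.
apply: Rplus_le_compat_r; apply: Rmult_le_compat_r; last lra.
by left; apply: Rinv_0_lt_compat.
Qed.

Theorem lemma2p4 :
  exists (c : R) (N : nat), forall m : nat, (N <= m)%nat ->
    Rabs (INR (OPT (@cycle_rel m)) - INR m * (ln (INR m) / ln 2)) <= c * INR m.
Proof.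
exists 2, 1%N => -[//|M] _; set s := behead (enum 'I_M.+1).
have Henum : ord0 :: s = enum 'I_M.+1 by rewrite /s enum_ordSl.
have Hsize : size s = M by rewrite size_behead size_enum_ord.
have Hpath : uniq (ord0 :: s) by rewrite Henum enum_uniq.
set t0 := bal_tree (up_log 2 M.+1) ord0 s.
have Ht0 : is_hctree t0 by rewrite /is_hctree /t0 wf_bal_tree leaves_bal_tree Henum perm_refl.
have Hlower : xlog2 (INR M.+1) <= INR (OPT (@cycle_rel M.+1)).
  have [t [/andP[_ Hperm] <-]] := OPT_attained (@cycle_rel M.+1) Ht0.
  have Hu : uniq (leaves t) by rewrite (perm_uniq Hperm) enum_uniq.
  have Hsub : {subset ord0 :: s <= leaves t} by move=> z _; rewrite (perm_mem Hperm) mem_enum.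
  have := xlog2_le_path_cost Hu Hpath Hsub.
  rewrite Hsize => Hlb; apply: Rle_trans Hlb _.
  by apply/le_INR/leP; rewrite hc_cost_cycle leq_addr.
have Hupper : (OPT (@cycle_rel M.+1) <= M.+1 * up_log 2 M.+1 + M.+1)%N.
  apply: leq_trans (OPT_le_cost _ Ht0) _; rewrite hc_cost_cycle.
  apply: leq_add.
    have := path_cost_bal_tree (d := up_log 2 M.+1) Hpath.
    by rewrite Hsize; apply; apply: up_logP.
  case: ifP => // _; apply: leq_trans (lca_size_le _ _ _) _.
  by rewrite leaves_bal_tree Henum size_enum_ord.
have Hlog := INR_up_log2_le (ltn0Sn M).
have Hm : 0 < INR M.+1 by apply: lt_0_INR; lia.
have HupR : INR (OPT (@cycle_rel M.+1)) <= INR M.+1 * INR (up_log 2 M.+1) + INR M.+1.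
  by rewrite -mult_INR -plus_INR; apply/le_INR/leP.
rewrite /xlog2 in Hlower; apply: Rabs_le; split; nra.
Qed.
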